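(* Let $I\in\{0,1\}^{n\times m}$, $C\subseteq X$, $D\subseteq Y$ with $I_{ij}=1$ for every $i\in C$ and $j\in D$, and let $J$ be the restriction of $I$ to $D^{\downarrow_I}\times C^{\uparrow_I}$ (i.e. $J\subseteq D^{\downarrow_I}\times C^{\uparrow_I}$ with $\langle i,j\rangle\in J$ iff $I_{ij}=1$). Then $\mathcal{I}_{C,D}=\mathcal{B}(D^{\downarrow_I},C^{\uparrow_I},J)$.
   Context: $X=\{1,\dots,n\}$, $Y=\{1,\dots,m\}$. For a binary relation (formal context) $K\subseteq X'\times Y'$ between sets $X'$ and $Y'$, and $C\subseteq X'$, $D\subseteq Y'$: $C^{\uparrow_K}=\{j\in Y'\mid \forall i\in C: \langle i,j\rangle\in K\}$, $D^{\downarrow_K}=\{i\in X'\mid \forall j\in D: \langle i,j\rangle\in K\}$, and $\mathcal{B}(X',Y',K)=\{\langle C,D\rangle\mid C\subseteq X', D\subseteq Y', C^{\uparrow_K}=D, D^{\downarrow_K}=C\}$. The matrix $I$ is identified with the relation $\{\langle i,j\rangle\mid I_{ij}=1\}\subseteq X\times Y$, and $\mathcal{B}(I)=\mathcal{B}(X,Y,I)$, ordered by $\langle C_1,D_1\rangle\leq\langle C_2,D_2\rangle$ iff $C_1\subseteq C_2$. $\gamma(C)=\langle C^{\uparrow_I\downarrow_I},C^{\uparrow_I}\rangle$, $\mu(D)=\langle D^{\downarrow_I},D^{\downarrow_I\uparrow_I}\rangle$, and $\mathcal{I}_{C,D}=\{c\in\mathcal{B}(I)\mid\gamma(C)\leq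 c\leq\mu(D)\}$. *)

(* X = 'I_n, Y = 'I_m (0-based indices). *)
From mathcomp Require Import all_boot all_algebra.
Set Implicit Arguments. Unset Strict Implicit. Unset Printing Implicit Defensive.

Section FCA.
Variables (n m : nat).

(* A formal context K ⊆ X' × Y' is given by the subsets X' Y' and a boolean
   relation K on X × Y (only its values on X' × Y' matter). *)
Definition up (Xs : {set 'I_n}) (Ys : {set 'I_m}) (K : 'I_n -> 'I_m -> bool)
  (C : {set 'I_n}) : {set 'I_m} :=
  [set j in Ys | [forall i in C, K i j]].

Definition down (Xs : {set 'I_n}) (Ys : {set 'I_m}) (K : 'I_n -> 'I_m -> bool)
  (D : {set 'I_m}) : {set 'I_n} :=
  [set i in Xs | [forall j in D, K i j]].

Definition concepts (Xs : {set 'I_n}) (Ys : {set 'I_m}) (K : 'I_n -> 'I_m -> bool)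
  : {set {set 'I_n} * {set 'I_m}} :=
  [set p : {set 'I_n} * {set 'I_m} | [&& p.1 \subset Xs, p.2 \subset Ys,
              up Xs Ys K p.1 == p.2 & down Xs Ys K p.2 == p.1]].

Definition relI (I : 'M[bool]_(n, m)) : 'I_n -> 'I_m -> bool := fun i j => I i j.

Definition upI (I : 'M[bool]_(n, m)) (C : {set 'I_n}) := up setT setT (relI I) C.
Definition downI (I : 'M[bool]_(n, m)) (D : {set 'I_m}) := down setT setT (relI I) D.

Definition BI (I : 'M[bool]_(n, m)) := concepts setT setT (relI I).

Definition cle (c1 c2 : {set 'I_n} * {set 'I_m}) : bool := c1.1 \subset c2.1.

Definition gammaI (I : 'M[bool]_(n, m)) (C : {set 'I_n}) : {set 'I_n} * {set 'I_m} :=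
  (downI I (upI I C), upI I C).
Definition muI (I : 'M[bool]_(n, m)) (D : {set 'I_m}) : {set 'I_n} * {set 'I_m} :=
  (downI I D, upI I (downI I D)).

Definition intervalCD (I : 'M[bool]_(n, m)) (C : {set 'I_n}) (D : {set 'I_m}) :=
  [set c in BI I | cle (gammaI I C) c && cle c (muI I D)].

Definition restrJ (I : 'M[bool]_(n, m)) (C : {set 'I_n}) (D : {set 'I_m})
  : 'I_n -> 'I_m -> bool :=
  fun i j => [&& i \in downI I D, j \in upI I C & I i j].

End FCA.

(* In the restricted context J every derivation is cut down by the bounds:
   E^J = C^I ∩ E^I and F^J = D^I ∩ F^I.  Since C × D ⊆ I, any concept (E, F) of J
   has C ⊆ E and D ⊆ F, so the bounds are redundant and (E, F) is a concept of I
   lying between γ(C) and μ(D).  Conversely a concept of I in that interval already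
   satisfies E ⊆ D^I and F = E^I ⊆ C^I, so intersecting with the bounds changes
   nothing. *)
From mathcomp Require Import all_boot all_algebra.

Set Implicit Arguments.
Unset Strict Implicit.
Unset Printing Implicit Defensive.

Section Derivation.
Variables (n m : nat) (Xs : {set 'I_n}) (Ys : {set 'I_m}) (K : 'I_n -> 'I_m -> bool).
Implicit Types (X : {set 'I_n}) (Y : {set 'I_m}).

Lemma mem_up X j : (j \in up Xs Ys K X) = (j \in Ys) && [forall i in X, K i j].
Proof. by rewrite inE. Qed.

Lemma mem_down Y i : (i \in down Xs Ys K Y) = (i \in Xs) && [forall j in Y, K i j].
Proof. by rewrite inE. Qed.

Lemma sub_down_up X Y :
  X \subset Xs -> Y \subset Ys -> (X \subset down Xs Ys K Y) = (Y \subset up Xs Ys K X).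
Proof.
move=> /subsetP XXs /subsetP YYs; apply/subsetP/subsetP => sub z z_in.
- rewrite mem_up YYs //=; apply/forall_inP => i /sub.
  by rewrite mem_down => /andP[_ /forall_inP->].
- rewrite mem_down XXs //=; apply/forall_inP => j /sub.
  by rewrite mem_up => /andP[_ /forall_inP->].
Qed.

Lemma up_antimono X1 X2 : X1 \subset X2 -> up Xs Ys K X2 \subset up Xs Ys K X1.
Proof.
move=> /subsetP sub12; apply/subsetP => j; rewrite !mem_up => /andP[-> /forall_inP K2].
by apply/forall_inP => i /sub12; apply: K2.
Qed.

Lemma down_antimono Y1 Y2 : Y1 \subset Y2 -> down Xs Ys K Y2 \subset down Xs Ys K Y1.
Proof.
move=> /subsetP sub12; apply/subsetP => i; rewrite !mem_down => /andP[-> /forall_inP K2].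
by apply/forall_inP => j /sub12; apply: K2.
Qed.

End Derivation.

Section Matrix.
Variables (n m : nat) (I : 'M[bool]_(n, m)).
Implicit Types (X : {set 'I_n}) (Y : {set 'I_m}).

Lemma mem_upI X j : (j \in upI I X) = [forall i in X, I i j].
Proof. by rewrite mem_up in_setT. Qed.

Lemma mem_downI Y i : (i \in downI I Y) = [forall j in Y, I i j].
Proof. by rewrite mem_down in_setT. Qed.

Lemma sub_downI_upI X Y : (X \subset downI I Y) = (Y \subset upI I X).
Proof. exact: sub_down_up (subsetT _) (subsetT _). Qed.

Lemma sub_closureI X : X \subset downI I (upI I X).
Proof. by rewrite sub_downI_upI. Qed.

Lemma closureI_sub_downI X Y :
  (downI I (upI I X) \subset downI I Y) = (X \subset downI I Y).
Proof.
apply/idP/idP => [|XY]; first exact/subset_trans/sub_closureI.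
by apply: down_antimono; rewrite -sub_downI_upI.
Qed.

Lemma mem_BI E F : ((E, F) \in BI I) = (upI I E == F) && (downI I F == E).
Proof. by rewrite inE !subsetT. Qed.

Variables (C : {set 'I_n}) (D : {set 'I_m}).

Lemma up_restrJ X :
  X \subset downI I D ->
  up (downI I D) (upI I C) (restrJ I C D) X = upI I C :&: upI I X.
Proof.
move=> /subsetP XD; apply/setP => j; rewrite in_setI mem_up.
case C_j: (j \in upI I C) => //=; rewrite mem_upI; apply: eq_forallb => i.
by case X_i: (i \in X); rewrite //= /restrJ XD ?C_j.
Qed.

Lemma down_restrJ Y :
  Y \subset upI I C ->
  down (downI I D) (upI I C) (restrJ I C D) Y = downI I D :&: downI I Y.
Proof.
move=> /subsetP YC; apply/setP => i; rewrite in_setI mem_down.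
case D_i: (i \in downI I D) => //=; rewrite mem_downI; apply: eq_forallb => j.
by case Y_j: (j \in Y); rewrite //= /restrJ D_i YC.
Qed.

End Matrix.

Theorem lemma3 (n m : nat) (I : 'M[bool]_(n, m)) (C : {set 'I_n}) (D : {set 'I_m}) :
  (forall i j, i \in C -> j \in D -> I i j = true) ->
  intervalCD I C D = concepts (downI I D) (upI I C) (restrJ I C D).
Proof.
move=> CD_in_I.
have C_D : C \subset downI I D.
  by apply/subsetP => i C_i; rewrite mem_downI; apply/forall_inP => j; apply: CD_in_I.
have D_C : D \subset upI I C by rewrite -sub_downI_upI.
apply/setP => -[E F]; rewrite inE mem_BI [in RHS]inE /cle /=.
apply/idP/and4P => [/andP[/andP[/eqP EF /eqP FE] /andP[closureC_E ED]]|[ED FC]].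
  have FC : F \subset upI I C.
    by rewrite -EF up_antimono // (subset_trans (sub_closureI I C)).
  by rewrite up_restrJ // down_restrJ // EF FE (setIidPr FC) (setIidPr ED).
rewrite up_restrJ // down_restrJ // => /eqP upJ_E /eqP downJ_F.
have DF : D \subset F by rewrite -upJ_E subsetI D_C -sub_downI_upI.
have CE : C \subset E by rewrite -downJ_F subsetI C_D sub_downI_upI.
have EF : upI I E = F by rewrite -upJ_E; apply/esym/setIidPr/up_antimono.
have FE : downI I F = E by rewrite -downJ_F; apply/esym/setIidPr/down_antimono.
by rewrite EF FE !eqxx -FE closureI_sub_downI FE CE.
Qed.
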